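(* For every pure context $F$, term $t$ and variable $x\notin\mathrm{fv}(F)$, we have $(\lambda x.F[x])\,t \sim F[t]$.
   Context: The calculus $\lambda_{\mathcal S}$. Terms: $t ::= x \mid \lambda x.t \mid t\,t \mid \mathcal{S}k.t \mid \langle t\rangle$ (shift and reset); values: $v ::= \lambda x.t \mid x$. $\lambda x.t$ binds $x$, $\mathcal{S}k.t$ binds $k$; terms up to $\alpha$-conversion; $\mathrm{fv}$ free variables; capture-avoiding substitution $t\{v/x\}$. Pure contexts $F ::= [\,] \mid v\,F \mid F\,t$; evaluation contexts $E ::= [\,] \mid v\,E \mid E\,t \mid \langle E\rangle$. Reduction: $E[(\lambda x.t)\,v] \to E[t\{v/x\}]$; $E[\langle F[\mathcal{S}k.t]\rangle] \to E[\langle t\{\lambda x.\langle F[x]\rangle/k\}\rangle]$ ($x\notin\mathrm{fv}(F)$); $E[\langle v\rangle]\to E[v]$. $t\Downarrow t'$ iff $t\to^*t'$ and $t'$ irreducible. Normal forms: values, control stuck terms $F[\mathcal{S}k.t]$, open stuck terms $E[x\,v]$. Fresh: not free in the terms/contexts considered. Normal form bisimilarity $\sim$: for a relation $\mathcal R$ on terms, $E_0\mathrel{\mathcal R}E_1$ iff either $E_0=E_0'[\langle F_0\rangle]$, $E_1=E_1'[\langle F_1\rangle]$ ($F_i$ pure) with $E_0'[x]\mathrel{\mathcal R}E_1'[x]$ and $\langle F_0[x]\rangle\mathrel{\mathcal R}\langle F_1[x]\rangle$ ($x$ fresh), or $E_0=F_0$, $E_1=F_1$ pure with $F_0[x]\mathrel{\mathcal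 R}F_1[x]$ ($x$ fresh). $v\mathbin{@}y$ is $x\,y$ if $v=x$, $t\{y/x\}$ if $v=\lambda x.t$. $\mathcal R^{\mathrm{nf}}$ on normal forms: $v_0\mathrel{\mathcal R^{\mathrm{nf}}}v_1$ if $v_0\mathbin{@}x\mathrel{\mathcal R}v_1\mathbin{@}x$ ($x$ fresh); $F_0[\mathcal{S}k.t_0]\mathrel{\mathcal R^{\mathrm{nf}}}F_1[\mathcal{S}k.t_1]$ if $F_0\mathrel{\mathcal R}F_1$ and $\langle t_0\rangle\mathrel{\mathcal R}\langle t_1\rangle$; $E_0[x\,v_0]\mathrel{\mathcal R^{\mathrm{nf}}}E_1[x\,v_1]$ if $E_0\mathrel{\mathcal R}E_1$ and $v_0\mathrel{\mathcal R^{\mathrm{nf}}}v_1$. $\mathcal R$ is a normal form simulation if $t_0\mathrel{\mathcal R}t_1$ and $t_0\Downarrow t_0'$ imply $t_1\Downarrow t_1'$ with $t_0'\mathrel{\mathcal R^{\mathrm{nf}}}t_1'$; a bisimulation if $\mathcal R$ and $\mathcal R^{-1}$ are simulations; $\sim$ is the largest normal form bisimulation. *)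

(* The calculus lambda_S (shift/reset) in locally nameless
   representation: bound variables are de Bruijn indices (BVar), free
   variables are named atoms (FVar, atoms = nat).  Terms up to alpha-conversion
   correspond to locally closed raw terms. *)
From Stdlib Require Import List Arith Relations.
Import ListNotations.

Definition atom := nat.

Inductive term : Type :=
| BVar  : nat -> term
| FVar  : atom -> term
| Lam   : term -> term
| App   : term -> term -> term
| Shift : term -> term           (* S k.t ; body binds index 0 (= k) *)
| Reset : term -> term.

Fixpoint open_rec (k : nat) (u : term) (t : term) : term :=
  match t with
  | BVar n => if Nat.eqb n k then u else BVar n
  | FVar x => FVar x
  | Lam b => Lam (open_rec (S k) u b)
  | App a b => App (open_rec k u a) (open_rec k u b)
  | Shift b => Shift (open_rec (S k) u b)
  | Reset b => Reset (open_rec k u b)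
  end.
Definition open (t u : term) : term := open_rec 0 u t.

Fixpoint close_rec (k : nat) (x : atom) (t : term) : term :=
  match t with
  | BVar n => BVar n
  | FVar y => if Nat.eqb y x then BVar k else FVar y
  | Lam b => Lam (close_rec (S k) x b)
  | App a b => App (close_rec k x a) (close_rec k x b)
  | Shift b => Shift (close_rec (S k) x b)
  | Reset b => Reset (close_rec k x b)
  end.
Definition close (x : atom) (t : term) : term := close_rec 0 x t.

Definition lam (x : atom) (t : term) : term := Lam (close x t).

Fixpoint fv (t : term) : list atom :=
  match t with
  | BVar _ => []
  | FVar x => [x]
  | Lam b | Shift b | Reset b => fv b
  | App a b => fv a ++ fv b
  end.

Fixpoint lc_at (k : nat) (t : term) : Prop :=
  match t with
  | BVar n => n < k
  | FVar _ => True
  | Lam b | Shift b => lc_at (S k) b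
  | App a b => lc_at k a /\ lc_at k b
  | Reset b => lc_at k b
  end.
Definition lc (t : term) : Prop := lc_at 0 t.

Definition is_val (t : term) : Prop :=
  match t with
  | Lam _ | FVar _ => True
  | _ => False
  end.

Inductive ctx : Type :=
| CHole : ctx
| CAppR : term -> ctx -> ctx
| CAppL : ctx -> term -> ctx
| CReset : ctx -> ctx.

Fixpoint plug (E : ctx) (t : term) : term :=
  match E with
  | CHole => t
  | CAppR v E' => App v (plug E' t)
  | CAppL E' u => App (plug E' t) u
  | CReset E' => Reset (plug E' t)
  end.

Fixpoint comp (E1 E2 : ctx) : ctx :=
  match E1 with
  | CHole => E2
  | CAppR v E' => CAppR v (comp E' E2)
  | CAppL E' u => CAppL (comp E' E2) u
  | CReset E' => CReset (comp E' E2)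
  end.

Fixpoint fv_ctx (E : ctx) : list atom :=
  match E with
  | CHole => []
  | CAppR v E' => fv v ++ fv_ctx E'
  | CAppL E' u => fv_ctx E' ++ fv u
  | CReset E' => fv_ctx E'
  end.

Fixpoint ectx (E : ctx) : Prop :=
  match E with
  | CHole => True
  | CAppR v E' => is_val v /\ ectx E'
  | CAppL E' _ => ectx E'
  | CReset E' => ectx E'
  end.

Fixpoint pure (F : ctx) : Prop :=
  match F with
  | CHole => True
  | CAppR v F' => is_val v /\ pure F'
  | CAppL F' _ => pure F'
  | CReset _ => False
  end.

Inductive step : term -> term -> Prop :=
| step_beta : forall E b v, ectx E -> is_val v ->
    step (plug E (App (Lam b) v)) (plug E (open b v))
| step_shift : forall E F b, ectx E -> pure F ->
    (* E[<F[S k.b]>] -> E[< b{ \x.<F[x]> / k } >] *)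
    step (plug E (Reset (plug F (Shift b))))
         (plug E (Reset (open b (Lam (Reset (plug F (BVar 0)))))))
| step_reset : forall E v, ectx E -> is_val v ->
    step (plug E (Reset v)) (plug E v).

Definition irreducible (t : term) : Prop := ~ exists t', step t t'.

Definition evalto (t t' : term) : Prop :=
  clos_refl_trans term step t t' /\ irreducible t'.

Definition fresh (x : atom) (l : list atom) : Prop := ~ In x l.

Definition app_at (v : term) (x : atom) : term :=
  match v with
  | Lam b => open b (FVar x)
  | _ => App v (FVar x)
  end.

Definition trel := term -> term -> Prop.

Definition ctx_rel (R : trel) (E0 E1 : ctx) : Prop :=
  (exists E0' F0 E1' F1,
      ectx E0' /\ pure F0 /\ ectx E1' /\ pure F1 /\
      E0 = comp E0' (CReset F0) /\ E1 = comp E1' (CReset F1) /\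
      (forall x, fresh x (fv_ctx E0 ++ fv_ctx E1) ->
         R (plug E0' (FVar x)) (plug E1' (FVar x)) /\
         R (Reset (plug F0 (FVar x))) (Reset (plug F1 (FVar x)))))
  \/
  (pure E0 /\ pure E1 /\
   forall x, fresh x (fv_ctx E0 ++ fv_ctx E1) ->
     R (plug E0 (FVar x)) (plug E1 (FVar x))).

Definition val_rel (R : trel) (v0 v1 : term) : Prop :=
  is_val v0 /\ is_val v1 /\
  forall x, fresh x (fv v0 ++ fv v1) -> R (app_at v0 x) (app_at v1 x).

Definition nf_rel (R : trel) (n0 n1 : term) : Prop :=
  val_rel R n0 n1
  \/
  (exists F0 b0 F1 b1,
      pure F0 /\ pure F1 /\
      n0 = plug F0 (Shift b0) /\ n1 = plug F1 (Shift b1) /\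
      ctx_rel R F0 F1 /\
      (forall k, fresh k (fv n0 ++ fv n1) ->
         R (Reset (open b0 (FVar k))) (Reset (open b1 (FVar k)))))
  \/
  (exists E0 E1 x v0 v1,
      ectx E0 /\ ectx E1 /\
      n0 = plug E0 (App (FVar x) v0) /\ n1 = plug E1 (App (FVar x) v1) /\
      ctx_rel R E0 E1 /\ val_rel R v0 v1).

Definition nf_simulation (R : trel) : Prop :=
  forall t0 t1, R t0 t1 -> forall t0', evalto t0 t0' ->
    exists t1', evalto t1 t1' /\ nf_rel R t0' t1'.

Definition nf_bisimulation (R : trel) : Prop :=
  nf_simulation R /\ nf_simulation (fun a b => R b a).

Definition nf_bisim (t0 t1 : term) : Prop :=
  exists R, nf_bisimulation R /\ R t0 t1.

(* Relate t0 to t1 when t1 arises from t0 by replacing some subterms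
   (\x.F[x]) u by F[u], the argument u being arbitrary.  Evaluation then runs in
   lock step on both sides, except when such a redex fires on the left (its
   argument having become a value): the right-hand side already sits at the
   result.  That silent step removes one replaced redex, so it cannot repeat
   forever, and the relation (on locally closed terms) is a normal form
   bisimulation. *)

From Stdlib Require Import List Arith Lia Relations Wf_nat.

Fixpoint lc_ctx_at (k : nat) (E : ctx) : Prop :=
  match E with
  | CHole => True
  | CAppR v E' => lc_at k v /\ lc_ctx_at k E'
  | CAppL E' u => lc_ctx_at k E' /\ lc_at k u
  | CReset E' => lc_ctx_at k E'
  end.

Lemma plug_comp E1 E2 t : plug (comp E1 E2) t = plug E1 (plug E2 t).
Proof. induction E1; simpl; f_equal; auto. Qed.

Lemma comp_assoc A B C : comp (comp A B) C = comp A (comp B C).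
Proof. induction A; simpl; f_equal; auto. Qed.

Lemma pure_ectx F : pure F -> ectx F.
Proof. induction F; simpl; tauto. Qed.

Lemma pure_comp A B : pure A -> pure B -> pure (comp A B).
Proof. induction A; simpl; tauto. Qed.

Lemma ectx_comp A B : ectx A -> ectx B -> ectx (comp A B).
Proof. induction A; simpl; tauto. Qed.

Lemma lc_at_plug E k t : lc_at k (plug E t) <-> lc_ctx_at k E /\ lc_at k t.
Proof. induction E; simpl; try rewrite IHE; tauto. Qed.

Lemma lc_at_plug_fvar E t x : lc_at 0 (plug E t) -> lc_at 0 (plug E (FVar x)).
Proof. rewrite !lc_at_plug; simpl; tauto. Qed.

Lemma lc_at_weaken t k j : lc_at k t -> k <= j -> lc_at j t.
Proof.
  revert k j; induction t; simpl; intros k j Ht Hkj; try tauto; try lia.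
  - apply (IHt (S k)); auto; lia.
  - split; [apply (IHt1 k) | apply (IHt2 k)]; tauto.
  - apply (IHt (S k)); auto; lia.
  - apply (IHt k); auto.
Qed.

Lemma lc_ctx_at_weaken E k j : lc_ctx_at k E -> k <= j -> lc_ctx_at j E.
Proof.
  induction E; simpl; intros HE Hkj; try tauto;
    repeat split; try apply IHE; try (eapply lc_at_weaken; [|exact Hkj]); tauto.
Qed.

Lemma open_rec_lc_at t k j u : lc_at k t -> k <= j -> open_rec j u t = t.
Proof.
  revert k j; induction t; simpl; intros k j Ht Hkj; f_equal; try tauto.
  - destruct (Nat.eqb_spec n j); auto; lia.
  - apply (IHt (S k)); auto; lia.
  - apply (IHt1 k); tauto.
  - apply (IHt2 k); tauto.
  - apply (IHt (S k)); auto; lia.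
  - apply (IHt k); auto.
Qed.

Lemma open_rec_plug E k u t :
  lc_ctx_at 0 E -> open_rec k u (plug E t) = plug E (open_rec k u t).
Proof.
  induction E; simpl; intros HE; f_equal; try apply IHE; try tauto;
    apply (open_rec_lc_at _ 0); try lia; tauto.
Qed.

Lemma close_rec_fresh t k x : ~ In x (fv t) -> close_rec k x t = t.
Proof.
  revert k; induction t; simpl; intros k Hx; f_equal; auto;
    try (rewrite in_app_iff in Hx; auto).
  destruct (Nat.eqb_spec a x); subst; tauto.
Qed.

Lemma close_rec_plug E k x t :
  ~ In x (fv_ctx E) -> close_rec k x (plug E t) = plug E (close_rec k x t).
Proof.
  induction E; simpl; intros Hx; f_equal; rewrite ?in_app_iff in Hx;
    try apply IHE; try apply close_rec_fresh; tauto.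
Qed.

Lemma lc_at_close_rec t k x : lc_at k t -> lc_at (S k) (close_rec k x t).
Proof.
  revert k; induction t; simpl; intros k Ht; auto; try lia; try tauto.
  - destruct (Nat.eqb_spec a x); simpl; auto.
  - split; [apply IHt1 | apply IHt2]; tauto.
Qed.

Lemma lc_at_open_rec t k u :
  lc_at (S k) t -> lc_at k u -> lc_at k (open_rec k u t).
Proof.
  revert k; induction t; simpl; intros k Ht Hu; try tauto.
  - destruct (Nat.eqb_spec n k); simpl; auto; lia.
  - apply IHt; auto. apply (lc_at_weaken _ k); auto.
  - split; [apply IHt1 | apply IHt2]; tauto.
  - apply IHt; auto. apply (lc_at_weaken _ k); auto.
  - apply IHt; auto.
Qed.

Lemma lc_app_at v y : is_val v -> lc v -> lc (app_at v y).
Proof.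
  destruct v; simpl; intros Hv Hl; try tauto.
  - split; exact I.
  - apply lc_at_open_rec; simpl; auto.
Qed.

Inductive red : term -> term -> Prop :=
| red_beta b v : is_val v -> red (App (Lam b) v) (open b v)
| red_reset v : is_val v -> red (Reset v) v
| red_shift F b : pure F ->
    red (Reset (plug F (Shift b))) (Reset (open b (Lam (Reset (plug F (BVar 0))))))
| red_appL t t' u : red t t' -> red (App t u) (App t' u)
| red_appR v t t' : is_val v -> red t t' -> red (App v t) (App v t')
| red_resetc t t' : red t t' -> red (Reset t) (Reset t').

Lemma red_plug E t t' : ectx E -> red t t' -> red (plug E t) (plug E t').
Proof.
  induction E; simpl; intros HE Ht; auto.
  - apply red_appR; tauto.
  - apply red_appL; auto.
  - apply red_resetc; auto.
Qed.

Lemma step_iff_red t t' : step t t' <-> red t t'.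
Proof.
  split.
  - intros []; apply red_plug; auto; constructor; auto.
  - induction 1 as [| | | t t' u _ IH | v t t' Hv _ IH | t t' _ IH].
    + apply (step_beta CHole); simpl; auto.
    + apply (step_reset CHole); simpl; auto.
    + apply (step_shift CHole); simpl; auto.
    + destruct IH.
      * apply (step_beta (CAppL E u)); auto.
      * apply (step_shift (CAppL E u)); auto.
      * apply (step_reset (CAppL E u)); auto.
    + destruct IH.
      * apply (step_beta (CAppR v E)); simpl; auto.
      * apply (step_shift (CAppR v E)); simpl; auto.
      * apply (step_reset (CAppR v E)); simpl; auto.
    + destruct IH.
      * apply (step_beta (CReset E)); auto.
      * apply (step_shift (CReset E)); auto.
      * apply (step_reset (CReset E)); auto.
Qed.

Lemma irreducible_iff_red t : irreducible t <-> ~ exists t', red t t'.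
Proof.
  unfold irreducible; split; intros H [t' Ht]; apply H; exists t';
    apply step_iff_red; auto.
Qed.

Lemma not_val_plug_shift F b : ~ is_val (plug F (Shift b)).
Proof. destruct F; simpl; auto. Qed.

Lemma not_val_plug_app E y v : ~ is_val (plug E (App (FVar y) v)).
Proof. destruct E; simpl; auto. Qed.

Lemma no_red_val v t : is_val v -> ~ red v t.
Proof. destruct v; simpl; try tauto; inversion 2. Qed.

Lemma no_red_plug_shift F b t : pure F -> ~ red (plug F (Shift b)) t.
Proof.
  revert t; induction F; simpl; intros t0 HF Hred; inversion Hred; subst;
    try destruct HF as [Hv HF]; try tauto;
    solve [ eapply not_val_plug_shift; eassumption
          | eapply no_red_val; [| eassumption]; simpl; auto
          | eapply IHF; eassumption
          | destruct F; discriminate ].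
Qed.

Lemma plug_shift_inj F F' b b' : pure F -> pure F' ->
  plug F' (Shift b') = plug F (Shift b) -> F' = F /\ b' = b.
Proof.
  revert F'; induction F; intros F' HF HF' Heq; destruct F'; simpl in *;
    try discriminate; try tauto; injection Heq; intros; subst.
  - auto.
  - destruct (IHF F'); try tauto; subst; auto.
  - exfalso; eapply not_val_plug_shift; apply HF.
  - exfalso; eapply not_val_plug_shift; apply HF'.
  - destruct (IHF F'); try tauto; subst; auto.
Qed.

Ltac absurd_red :=
  exfalso;
  match goal with
  | H : red ?v _ |- _ => refine (no_red_val v _ _ H); first [exact I | assumption]
  | H : red (plug _ (Shift _)) _ |- _ => eapply no_red_plug_shift; [| exact H]; assumption
  | H : is_val (plug _ (Shift _)) |- _ => exact (not_val_plug_shift _ _ H)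
  end.

Lemma red_det t t1 t2 : red t t1 -> red t t2 -> t1 = t2.
Proof.
  intros H1; revert t2; induction H1; intros t2 H2; inversion H2; subst;
    try solve [absurd_red | f_equal; auto].
  destruct (plug_shift_inj F F0 b b0); subst; auto.
Qed.

Lemma plug_app_neq_plug_shift E y v F b : ectx E -> is_val v -> pure F ->
  plug E (App (FVar y) v) <> plug F (Shift b).
Proof.
  revert F; induction E; intros F' HE Hv HF Heq; destruct F'; simpl in *;
    try discriminate; try tauto; injection Heq; intros; subst;
    repeat match goal with H : _ /\ _ |- _ => destruct H end;
    solve [ eapply not_val_plug_shift; eassumption
          | eapply not_val_plug_app; eassumption
          | eapply IHE; eauto
          | destruct F'; discriminate ].
Qed.

Lemma no_red_plug_app E y v t : ectx E -> is_val v -> ~ red (plug E (App (FVar y) v)) t.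
Proof.
  revert t; induction E; simpl; intros t0 HE Hv Hred; inversion Hred; subst;
    repeat match goal with H : _ /\ _ |- _ => destruct H end;
    try solve [ absurd_red
              | eapply IHE; eauto
              | eapply not_val_plug_app; eassumption
              | eapply plug_app_neq_plug_shift; eauto
              | match goal with H : _ = plug ?X (App _ _) |- _ =>
                  destruct X; discriminate end ].
Qed.

Inductive normal_form : term -> Prop :=
| nf_val v : is_val v -> normal_form v
| nf_control_stuck F b : pure F -> normal_form (plug F (Shift b))
| nf_open_stuck E y v : ectx E -> is_val v -> normal_form (plug E (App (FVar y) v)).

Lemma normal_form_no_red t t' : normal_form t -> ~ red t t'.
Proof.
  destruct 1; [apply no_red_val | apply no_red_plug_shift | apply no_red_plug_app];
    auto.
Qed.

Lemma red_or_normal_form t : lc t -> (exists t', red t t') \/ normal_form t.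
Proof.
  unfold lc; induction t as [n | y | b | t1 IH1 t2 IH2 | b | b IH]; simpl; intros Hlc.
  - lia.
  - right; apply nf_val; exact I.
  - right; apply nf_val; exact I.
  - destruct Hlc as [Hlc1 Hlc2].
    destruct (IH1 Hlc1) as [[t' Ht] | [v Hv | F b HF | E y v HE Hv]].
    + left; eexists; apply red_appL; eauto.
    + destruct (IH2 Hlc2) as [[t' Ht] | [w Hw | F b HF | E y w HE Hw]].
      * left; eexists; apply red_appR; eauto.
      * destruct v; simpl in Hv; try tauto.
        -- right; apply (nf_open_stuck CHole); simpl; auto.
        -- left; eexists; apply red_beta; auto.
      * right; apply (nf_control_stuck (CAppR v F)); simpl; auto.
      * right; apply (nf_open_stuck (CAppR v E)); simpl; auto.
    + right; apply (nf_control_stuck (CAppL F t2)); simpl; auto.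
    + right; apply (nf_open_stuck (CAppL E t2)); simpl; auto.
  - right; apply (nf_control_stuck CHole); simpl; auto.
  - destruct (IH Hlc) as [[t' Ht] | [v Hv | F b' HF | E y v HE Hv]].
    + left; eexists; apply red_resetc; eauto.
    + left; eexists; apply red_reset; eauto.
    + left; eexists; apply red_shift; eauto.
    + right; apply (nf_open_stuck (CReset E)); simpl; auto.
Qed.

Lemma red_lc t t' : red t t' -> lc t -> lc t'.
Proof.
  unfold lc, open; induction 1; simpl; intros Hlc; try tauto.
  - apply lc_at_open_rec; tauto.
  - apply lc_at_plug in Hlc; simpl in Hlc.
    apply lc_at_open_rec; try tauto; simpl.
    apply lc_at_plug; simpl; split; [|lia].
    apply (lc_ctx_at_weaken _ 0); [tauto | lia].
Qed.

Lemma fresh_app_comm x l1 l2 : fresh x (l1 ++ l2) -> fresh x (l2 ++ l1).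
Proof. unfold fresh; rewrite !in_app_iff; tauto. Qed.

Lemma val_rel_flip R v0 v1 : val_rel R v0 v1 -> val_rel (fun a b => R b a) v1 v0.
Proof.
  intros (Hv0 & Hv1 & HR); repeat split; auto.
  intros x Hx; apply HR, fresh_app_comm, Hx.
Qed.

Lemma ctx_rel_flip R E0 E1 : ctx_rel R E0 E1 -> ctx_rel (fun a b => R b a) E1 E0.
Proof.
  intros [(E0' & F0 & E1' & F1 & HE0 & HF0 & HE1 & HF1 & -> & -> & HR) | (HF0 & HF1 & HR)].
  - left; exists E1', F1, E0', F0; repeat split; auto;
      apply HR, fresh_app_comm; auto.
  - right; repeat split; auto; intros x Hx; apply HR, fresh_app_comm, Hx.
Qed.

Lemma nf_rel_flip R n0 n1 : nf_rel R n0 n1 -> nf_rel (fun a b => R b a) n1 n0.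
Proof.
  intros [Hv | [(F0 & b0 & F1 & b1 & HF0 & HF1 & -> & -> & HF & Hb)
              | (E0 & E1 & x & v0 & v1 & HE0 & HE1 & -> & -> & HE & Hv)]].
  - left; apply val_rel_flip; auto.
  - right; left; exists F1, b1, F0, b0; repeat split; auto using ctx_rel_flip.
    intros k Hk; apply Hb, fresh_app_comm, Hk.
  - right; right; exists E1, E0, x, v1, v0.
    do 4 (split; [auto |]); split; auto using ctx_rel_flip, val_rel_flip.
Qed.

Lemma steps_lc t t' : clos_refl_trans term step t t' -> lc t -> lc t'.
Proof. induction 1; auto; apply red_lc, step_iff_red; auto. Qed.

Lemma evalto_red t t' u : red t t' -> evalto t' u -> evalto t u.
Proof.
  intros Ht [Hrt Hu]; split; auto.
  eapply rt_trans; [apply rt_step, step_iff_red, Ht | exact Hrt].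
Qed.

Lemma normal_form_evalto t : normal_form t -> evalto t t.
Proof.
  intros Hnf; split; [apply rt_refl |].
  apply irreducible_iff_red; intros [t' Ht]; exact (normal_form_no_red _ _ Hnf Ht).
Qed.

Lemma irreducible_normal_form t : lc t -> irreducible t -> normal_form t.
Proof.
  intros Hlc Hirr; destruct (red_or_normal_form t Hlc) as [Hred | Hnf]; auto.
  exfalso; exact (proj1 (irreducible_iff_red t) Hirr Hred).
Qed.

Section Contraction.

Variable body : term.
Variable F : ctx.
Hypothesis body_lc : lc_at 1 body.
Hypothesis F_lc : lc_ctx_at 0 F.
Hypothesis F_pure : pure F.
Hypothesis open_body : forall v, open body v = plug F v.

(* The index counts the contracted redexes [(Lam body) a ~> F[a]].  It drops
   when the left-hand side fires such a redex while the right-hand side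
   stays put, so the left side cannot stutter forever. *)
Inductive contr : nat -> term -> term -> Prop :=
| contr_bvar n : contr 0 (BVar n) (BVar n)
| contr_fvar y : contr 0 (FVar y) (FVar y)
| contr_lam n a b : contr n a b -> contr n (Lam a) (Lam b)
| contr_app n m a a' b b' :
    contr n a b -> contr m a' b' -> contr (n + m) (App a a') (App b b')
| contr_shift n a b : contr n a b -> contr n (Shift a) (Shift b)
| contr_reset n a b : contr n a b -> contr n (Reset a) (Reset b)
| contr_redex n a b : contr n a b -> contr (S n) (App (Lam body) a) (plug F b).

Lemma contr_refl t : contr 0 t t.
Proof. induction t; try constructor; auto; apply (contr_app 0 0); auto. Qed.

Lemma contr_plug E n a b : contr n a b -> contr n (plug E a) (plug E b).
Proof.
  induction E; simpl; intros Hab; auto.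
  - apply (contr_app 0); auto using contr_refl.
  - rewrite <- (Nat.add_0_r n); apply contr_app; auto using contr_refl.
  - constructor; auto.
Qed.

Lemma contr_open_rec n a b m u v k :
  contr n a b -> contr m u v -> exists p, contr p (open_rec k u a) (open_rec k v b).
Proof.
  intros Hab Huv; revert k; induction Hab; simpl; intros k.
  - destruct (Nat.eqb n k); eauto using contr_bvar.
  - eauto using contr_fvar.
  - destruct (IHHab (S k)) as [p Hp]; eauto using contr_lam.
  - destruct (IHHab1 k) as [p Hp], (IHHab2 k) as [q Hq]; eauto using contr_app.
  - destruct (IHHab (S k)) as [p Hp]; eauto using contr_shift.
  - destruct (IHHab k) as [p Hp]; eauto using contr_reset.
  - destruct (IHHab k) as [p Hp]; exists (S p).
    rewrite (open_rec_lc_at body 1 (S k)), open_rec_plug by (auto; lia).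
    constructor; auto.
Qed.

Lemma contr_is_val n v w : contr n v w -> is_val v -> is_val w.
Proof. destruct 1; simpl; tauto. Qed.

Lemma contr_app_at n v w y :
  contr n v w -> is_val v -> exists p, contr p (app_at v y) (app_at w y).
Proof.
  destruct 1; simpl; try tauto; intros _.
  - exists 0; apply contr_refl.
  - eapply contr_open_rec; eauto using contr_refl.
Qed.

Definition ctx_contr (A B : ctx) : Prop :=
  forall m a b, contr m a b -> exists q, contr q (plug A a) (plug B b).

Lemma ctx_contr_hole : ctx_contr CHole CHole.
Proof. intros m a b Hab; eauto. Qed.

Lemma ctx_contr_appR n v w A B :
  contr n v w -> ctx_contr A B -> ctx_contr (CAppR v A) (CAppR w B).
Proof.
  intros Hvw HAB m a b Hab; destruct (HAB m a b Hab) as [q Hq].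
  eexists; simpl; apply contr_app; eauto.
Qed.

Lemma ctx_contr_appL n u u' A B :
  contr n u u' -> ctx_contr A B -> ctx_contr (CAppL A u) (CAppL B u').
Proof.
  intros Huu HAB m a b Hab; destruct (HAB m a b Hab) as [q Hq].
  eexists; simpl; apply contr_app; eauto.
Qed.

Lemma ctx_contr_reset A B : ctx_contr A B -> ctx_contr (CReset A) (CReset B).
Proof.
  intros HAB m a b Hab; destruct (HAB m a b Hab) as [q Hq].
  eexists; simpl; apply contr_reset; eauto.
Qed.

Lemma ctx_contr_redex A B : ctx_contr A B -> ctx_contr (CAppR (Lam body) A) (comp F B).
Proof.
  intros HAB m a b Hab; destruct (HAB m a b Hab) as [q Hq].
  eexists; simpl; rewrite plug_comp; apply contr_redex; eauto.
Qed.

Lemma contr_plug_shift F0 n b0 t1 : pure F0 -> contr n (plug F0 (Shift b0)) t1 ->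
  exists F1 b1 p, pure F1 /\ t1 = plug F1 (Shift b1) /\ contr p b0 b1 /\ ctx_contr F0 F1.
Proof.
  revert n t1; induction F0 as [| v F0 IH | F0 IH u | F0 IH]; simpl;
    intros n t1 HF0 Ht; inversion Ht; subst; try tauto;
    try match goal with
    | Hs : contr _ (plug F0 _) _ |- _ =>
        destruct (IH _ _ ltac:(tauto) Hs) as (F1 & b1 & p & HF1 & -> & Hb & HF)
    end.
  - exists CHole, b, n; simpl; auto using ctx_contr_hole.
  - exists (CAppR b F1), b1, p; simpl; repeat split; eauto using ctx_contr_appR.
    eapply contr_is_val; eauto; tauto.
  - exists (comp F F1), b1, p; rewrite plug_comp;
      auto using pure_comp, ctx_contr_redex.
  - exists (CAppL F1 b'), b1, p; simpl; eauto using ctx_contr_appL.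
  - destruct F0; discriminate.
Qed.

(* The shape of [ctx_rel]: a pure context, or an evaluation context split at
   its innermost reset. *)
Definition ectx_contr (E0 E1 : ctx) : Prop :=
  (pure E0 /\ pure E1 /\ ctx_contr E0 E1) \/
  (exists E0' F0 E1' F1, ectx E0' /\ pure F0 /\ ectx E1' /\ pure F1 /\
     E0 = comp E0' (CReset F0) /\ E1 = comp E1' (CReset F1) /\
     ctx_contr E0' E1' /\ ctx_contr F0 F1).

Lemma ectx_contr_hole : ectx_contr CHole CHole.
Proof. left; simpl; auto using ctx_contr_hole. Qed.

Lemma ectx_contr_appR n v w E0 E1 : is_val v -> is_val w ->
  contr n v w -> ectx_contr E0 E1 -> ectx_contr (CAppR v E0) (CAppR w E1).
Proof.
  intros Hv Hw Hvw
    [(P0 & P1 & HE) | (E0' & F0 & E1' & F1 & HE0 & P0 & HE1 & P1 & -> & -> & HE & HF)].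
  - left; simpl; repeat split; eauto using ctx_contr_appR.
  - right; exists (CAppR v E0'), F0, (CAppR w E1'), F1; simpl;
      repeat split; eauto using ctx_contr_appR.
Qed.

Lemma ectx_contr_appL n u u' E0 E1 :
  contr n u u' -> ectx_contr E0 E1 -> ectx_contr (CAppL E0 u) (CAppL E1 u').
Proof.
  intros Hu
    [(P0 & P1 & HE) | (E0' & F0 & E1' & F1 & HE0 & P0 & HE1 & P1 & -> & -> & HE & HF)].
  - left; simpl; repeat split; eauto using ctx_contr_appL.
  - right; exists (CAppL E0' u), F0, (CAppL E1' u'), F1; simpl;
      repeat split; eauto using ctx_contr_appL.
Qed.

Lemma ectx_contr_reset E0 E1 : ectx_contr E0 E1 -> ectx_contr (CReset E0) (CReset E1).
Proof.
  intros [(P0 & P1 & HE) | (E0' & F0 & E1' & F1 & HE0 & P0 & HE1 & P1 & -> & -> & HE & HF)].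
  - right; exists CHole, E0, CHole, E1; simpl; repeat split; auto using ctx_contr_hole.
  - right; exists (CReset E0'), F0, (CReset E1'), F1; simpl;
      repeat split; auto using ctx_contr_reset.
Qed.

Lemma ectx_contr_redex E0 E1 :
  ectx_contr E0 E1 -> ectx_contr (CAppR (Lam body) E0) (comp F E1).
Proof.
  intros [(P0 & P1 & HE) | (E0' & F0 & E1' & F1 & HE0 & P0 & HE1 & P1 & -> & -> & HE & HF)].
  - left; simpl; repeat split; auto using pure_comp, ctx_contr_redex.
  - right; exists (CAppR (Lam body) E0'), F0, (comp F E1'), F1; simpl.
    rewrite comp_assoc; repeat split; auto using ectx_comp, pure_ectx, ctx_contr_redex.
Qed.

Lemma contr_plug_app E0 n y v0 t1 : ectx E0 -> is_val v0 ->
  contr n (plug E0 (App (FVar y) v0)) t1 ->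
  exists E1 v1 p, ectx E1 /\ is_val v1 /\ t1 = plug E1 (App (FVar y) v1) /\
    contr p v0 v1 /\ ectx_contr E0 E1.
Proof.
  revert n t1; induction E0 as [| v E0 IH | E0 IH u | E0 IH]; simpl;
    intros n t1 HE0 Hv0 Ht; inversion Ht; subst; try tauto;
    try match goal with
    | Hs : contr _ (plug E0 _) _ |- _ =>
        destruct (IH _ _ ltac:(tauto) Hv0 Hs) as (E1 & v1 & p & HE1 & Hv1 & -> & Hv & HE)
    end.
  - match goal with Hs : contr _ (FVar _) _ |- _ => inversion Hs; subst end.
    exists CHole, b', m; simpl; repeat split; eauto using contr_is_val, ectx_contr_hole.
  - assert (is_val b) by (eapply contr_is_val; eauto; tauto).
    exists (CAppR b E1), v1, p; simpl.
    repeat split; eauto; eapply ectx_contr_appR; eauto; tauto.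
  - exists (comp F E1), v1, p; rewrite plug_comp.
    repeat split; auto using ectx_comp, pure_ectx, ectx_contr_redex.
  - exists (CAppL E1 b'), v1, p; simpl; repeat split; eauto using ectx_contr_appL.
  - destruct E0; discriminate.
  - exists (CReset E1), v1, p; simpl; repeat split; auto using ectx_contr_reset.
Qed.

Lemma contr_red t0 t0' n t1 : red t0 t0' -> contr n t0 t1 ->
  (exists t1' p, red t1 t1' /\ contr p t0' t1') \/ (exists m, m < n /\ contr m t0' t1).
Proof.
  intros Hred; revert n t1; induction Hred as [b v Hv | v Hv | F0 b HF0
    | t t' u Hred IH | v t t' Hv _ IH | t t' _ IH]; intros n t1 Ht; inversion Ht; subst.
  - match goal with Hb : contr _ (Lam _) _ |- _ => inversion Hb; subst end.
    match goal with Hb : contr _ b _, Hv' : contr _ v _ |- _ =>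
      destruct (contr_open_rec _ _ _ _ _ _ 0 Hb Hv') as [p Hp] end.
    left; eexists _, p; split; [apply red_beta; eauto using contr_is_val | exact Hp].
  - (* a contracted redex fires: only the left-hand side moves *)
    right; exists n0; split; [lia |]; rewrite open_body; apply contr_plug; auto.
  - left; exists b, n; split; [apply red_reset; eauto using contr_is_val | auto].
  - match goal with Hs : contr _ (plug F0 _) _ |- _ =>
      destruct (contr_plug_shift _ _ _ _ HF0 Hs) as (F1 & b1 & p & HF1 & -> & Hb & HF) end.
    destruct (HF 0 (BVar 0) (BVar 0) (contr_bvar 0)) as [q Hq].
    destruct (contr_open_rec _ _ _ _ _ _ 0 Hb (contr_lam _ _ _ (contr_reset _ _ _ Hq)))
      as [r Hr].
    left; eexists _, r; split; [apply red_shift; auto | constructor; exact Hr].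
  - match goal with Hs : contr _ t _ |- _ => destruct (IH _ _ Hs) as
      [(t1' & p & Hr & Hp) | (m' & Hm & Hp)] end.
    + left; eexists _, _; split; [apply red_appL; eauto | apply contr_app; eauto].
    + right; eexists; split; [| apply contr_app; eauto]; lia.
  - inversion Hred.
  - match goal with Hs : contr _ t _ |- _ => destruct (IH _ _ Hs) as
      [(t1' & p & Hr & Hp) | (m' & Hm & Hp)] end.
    + left; eexists _, _; split;
        [apply red_appR; eauto using contr_is_val | apply contr_app; eauto].
    + right; eexists; split; [| apply contr_app; eauto]; lia.
  - match goal with Hs : contr _ t _ |- _ => destruct (IH _ _ Hs) as
      [(t1' & p & Hr & Hp) | (m' & Hm & Hp)] end.
    + left; eexists _, _; split;
        [apply red_plug, Hr; auto using pure_ectx | constructor; eauto].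
    + right; eexists; split; [| constructor; eauto]; lia.
  - match goal with Hs : contr _ t _ |- _ => destruct (IH _ _ Hs) as
      [(t1' & p & Hr & Hp) | (m' & Hm & Hp)] end.
    + left; eexists _, _; split; [apply red_resetc; eauto | constructor; eauto].
    + right; eexists; split; [| constructor; eauto]; lia.
Qed.

Definition contr_rel (a b : term) : Prop := lc a /\ exists n, contr n a b.

Lemma contr_normal_form n t0 t1 : normal_form t0 -> contr n t0 t1 -> normal_form t1.
Proof.
  destruct 1 as [v Hv | F0 b0 HF0 | E0 y v0 HE0 Hv0]; intros Ht.
  - apply nf_val; eapply contr_is_val; eauto.
  - destruct (contr_plug_shift _ _ _ _ HF0 Ht) as (F1 & b1 & p & HF1 & -> & _).
    apply nf_control_stuck; auto.
  - destruct (contr_plug_app _ _ _ _ _ HE0 Hv0 Ht) as (E1 & v1 & p & HE1 & Hv1 & -> & _).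
    apply nf_open_stuck; auto.
Qed.

Lemma val_rel_contr n v0 v1 :
  lc v0 -> is_val v0 -> contr n v0 v1 -> val_rel contr_rel v0 v1.
Proof.
  intros Hlc Hv0 Hv; split; [auto | split; [eapply contr_is_val; eauto |]].
  intros x _; split; [apply lc_app_at; auto | eapply contr_app_at; eauto].
Qed.

Lemma ctx_rel_contr E0 E1 t : lc (plug E0 t) -> ectx_contr E0 E1 -> ctx_rel contr_rel E0 E1.
Proof.
  unfold lc; intros Hlc
    [(P0 & P1 & HE) | (E0' & F0 & E1' & F1 & HE0 & P0 & HE1 & P1 & -> & -> & HE & HF)].
  - right; repeat split; auto; [eapply lc_at_plug_fvar; eauto |].
    apply (HE 0), contr_fvar.
  - left; exists E0', F0, E1', F1; do 6 (split; [auto |]).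
    rewrite plug_comp in Hlc; simpl in Hlc.
    intros x _; repeat split.
    + eapply lc_at_plug_fvar; eauto.
    + apply (HE 0), contr_fvar.
    + apply lc_at_plug in Hlc; simpl in Hlc; eapply lc_at_plug_fvar; apply Hlc.
    + destruct (HF 0 _ _ (contr_fvar x)) as [q Hq]; exists q; constructor; auto.
Qed.

Lemma contr_nf_rel n t0 t1 : lc t0 -> normal_form t0 -> contr n t0 t1 ->
  nf_rel contr_rel t0 t1.
Proof.
  intros Hlc; destruct 1 as [v Hv | F0 b0 HF0 | E0 y v0 HE0 Hv0]; intros Ht.
  - left; eapply val_rel_contr; eauto.
  - destruct (contr_plug_shift _ _ _ _ HF0 Ht) as (F1 & b1 & p & HF1 & -> & Hb & HF).
    right; left; exists F0, b0, F1, b1; do 4 (split; [auto |]); split.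
    + eapply ctx_rel_contr; [exact Hlc | left; auto].
    + intros k _; split.
      * unfold lc in *; apply lc_at_plug in Hlc; simpl in Hlc.
        simpl; apply lc_at_open_rec; simpl; tauto.
      * destruct (contr_open_rec _ _ _ _ _ _ 0 Hb (contr_fvar k)) as [q Hq].
        exists q; constructor; exact Hq.
  - destruct (contr_plug_app _ _ _ _ _ HE0 Hv0 Ht)
      as (E1 & v1 & p & HE1 & Hv1 & -> & Hv & HE).
    right; right; exists E0, E1, y, v0, v1; do 4 (split; [auto |]); split.
    + eapply ctx_rel_contr; eauto.
    + unfold lc in Hlc; apply lc_at_plug in Hlc; simpl in Hlc.
      eapply val_rel_contr; eauto; apply Hlc.
Qed.

Lemma contr_rel_simulation : nf_simulation contr_rel.
Proof.
  intros t0 t1 [Hlc [n Ht]] t0' [Hrt Hirr]; apply clos_rt_rt1n in Hrt.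
  revert n t1 Hlc Ht; induction Hrt as [t0 | t0 t0'' t0' Hstep _ IH];
    intros n t1 Hlc Ht.
  - assert (Hnf : normal_form t0) by (apply irreducible_normal_form; auto).
    exists t1; split; [eapply normal_form_evalto, contr_normal_form; eauto |].
    eapply contr_nf_rel; eauto.
  - apply step_iff_red in Hstep.
    assert (Hlc'' : lc t0'') by (eapply red_lc; eauto).
    destruct (contr_red _ _ _ _ Hstep Ht) as [(t1' & p & Hred & Hp) | (m & _ & Hm)].
    + destruct (IH Hirr _ _ Hlc'' Hp) as (t2 & Ht2 & Hnf).
      exists t2; split; [eapply evalto_red |]; eauto.
    + eapply IH; eauto.
Qed.

Lemma contr_catch_up n t0 t1 : lc t0 -> contr n t0 t1 ->
  (exists t0' m, clos_refl_trans term step t0 t0' /\ normal_form t0' /\ contr m t0' t1) \/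
  (exists t0' t1' p, clos_refl_trans term step t0 t0' /\ red t1 t1' /\ contr p t0' t1').
Proof.
  revert t0; induction n as [n IH] using lt_wf_ind; intros t0 Hlc Ht.
  destruct (red_or_normal_form t0 Hlc) as [[t0' Hred] | Hnf].
  - assert (Hstep : clos_refl_trans term step t0 t0')
      by (apply rt_step, step_iff_red; auto).
    destruct (contr_red _ _ _ _ Hred Ht) as [(t1' & p & Hred1 & Hp) | (m & Hm & Hp)].
    + right; exists t0', t1', p; auto.
    + destruct (IH m Hm t0' (red_lc _ _ Hred Hlc) Hp)
        as [(t0'' & m' & Hs & Hnf & Hc) | (t0'' & t1' & p & Hs & Hred1 & Hc)].
      * left; exists t0'', m'; split; [eapply rt_trans |]; eauto.
      * right; exists t0'', t1', p; split; [eapply rt_trans |]; eauto.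
  - left; exists t0, n; split; [apply rt_refl | auto].
Qed.

Lemma contr_rel_simulation_inv : nf_simulation (fun a b => contr_rel b a).
Proof.
  intros t1 t0 [Hlc [n Ht]] t1' [Hrt Hirr]; apply clos_rt_rt1n in Hrt.
  enough (exists t0', evalto t0 t0' /\ nf_rel contr_rel t0' t1') as (t0' & H0 & Hnf)
    by (exists t0'; split; [auto | apply nf_rel_flip; auto]).
  revert n t0 Hlc Ht; induction Hrt as [t1 | t1 t1'' t1' Hstep _ IH];
    intros n t0 Hlc Ht;
    destruct (contr_catch_up _ _ _ Hlc Ht)
      as [(t0' & m & Hs & Hnf & Hc) | (t0' & t1''' & p & Hs & Hred & Hc)].
  - exists t0'; split; [split; [auto | apply normal_form_evalto; auto] |].
    eapply contr_nf_rel; eauto using steps_lc.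
  - exfalso; apply (proj1 (irreducible_iff_red t1) Hirr); eauto.
  - exfalso; eapply normal_form_no_red; [eapply contr_normal_form; eauto |].
    apply step_iff_red; eauto.
  - apply step_iff_red in Hstep; rewrite (red_det _ _ _ Hred Hstep) in Hc.
    destruct (IH Hirr _ _ (steps_lc _ _ Hs Hlc) Hc) as (t2 & [Hs2 Hirr2] & Hnf).
    exists t2; split; [split; [eapply rt_trans |] |]; eauto.
Qed.

End Contraction.

Theorem lemma5 (F : ctx) (t : term) (x : atom) :
  pure F -> lc (plug F (FVar x)) -> lc t -> ~ In x (fv_ctx F) ->
  nf_bisim (App (lam x (plug F (FVar x))) t) (plug F t).
Proof.
  intros HF HFx Ht Hx.
  set (body := close x (plug F (FVar x))).
  assert (HF_lc : lc_ctx_at 0 F) by (apply lc_at_plug in HFx; tauto).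
  assert (body_lc : lc_at 1 body) by (apply lc_at_close_rec, HFx).
  assert (open_body : forall v, open body v = plug F v).
  { intros v; unfold body, open, close.
    rewrite close_rec_plug, open_rec_plug by auto; simpl.
    rewrite Nat.eqb_refl; reflexivity. }
  exists (contr_rel body F); split.
  - split; [apply contr_rel_simulation | apply contr_rel_simulation_inv]; auto.
  - split; [split; [exact body_lc | exact Ht] |].
    exists 1; apply contr_redex, contr_refl.
Qed.
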